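(* Let $\mathcal L:\mathcal Y\times\mathbb R\to\mathbb R$ be continuously differentiable and $\mu$-strongly convex, and fix $\varepsilon>0$. (1) If $n\ge1$ and $f_1,f_2\in\mathrm{NN}_n$ satisfy $R(f_i)\le R(\mathrm{NN}_n)+\varepsilon$ for $i\in\{1,2\}$, then $D(f_1,f_2)\le\frac8\mu\big(R(\mathrm{NN}_n)-R(\mathrm{NN}_{2n})+\varepsilon\big)$. (2) If $d\ge1$ and $f_1,f_2\in\mathsf{Tree}_d$ satisfy $R(f_i)\le R(\mathsf{Tree}_d)+\varepsilon$ for $i\in\{1,2\}$, then $D(f_1,f_2)\le\frac8\mu\big(R(\mathsf{Tree}_d)-R(\mathsf{Tree}_{2d})+\varepsilon\big)$.
   Context: $P$ is a distribution on $\mathcal X\times\mathcal Y$ with $\mathcal X\subseteq\mathbb R^m$; expectations are over $(x,y)\sim P$. $\mathcal L$ is $\mu$-strongly convex if $\mathcal L(y,p_1)\ge\mathcal L(y,p_2)+\partial_p\mathcal L(y,p_2)(p_1-p_2)+\frac\mu2(p_1-p_2)^2$ for all $y,p_1,p_2$. $R(f)=\mathbb E[\mathcal L(y,f(x))]$, $R(\mathcal F)=\inf_{f\in\mathcal F}R(f)$, $D(f_1,f_2)=\mathbb E[(f_1(x)-f_2(x))^2]$. With $\sigma(t)=\max\{0,t\}$, $\mathrm{NN}_n$ is the class of real-valued functions on $\mathcal X$ computable by a finite directed acyclic graph with at most $n$ internal nodes, each computing $\sigma(\langle w,u\rangle+b)$ of its inputs $u$, with an output node computing an affine combination of the input coordinates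 and internal node values. $\mathsf{Tree}_d$ is the class of predictors computed by axis-aligned regression trees of depth at most $d$: rooted binary trees whose internal nodes are labeled by a coordinate $j\in[m]$ and threshold $t$ (routing $x$ left iff $x_j\le t$) and whose leaves are labeled by constants in $[0,1]$. *)

From HB Require Import structures.
From mathcomp Require Import all_boot all_order all_algebra.
From mathcomp Require Import all_classical all_reals all_analysis.
Set Implicit Arguments. Unset Strict Implicit. Unset Printing Implicit Defensive.
Import Order.TTheory GRing.Theory Num.Theory.
Local Open Scope classical_set_scope.
Local Open Scope ring_scope.

Section Defs.
Variables (R : realType) (m : nat).

Definition relu (t : R) : R := Num.max 0 t.

(* A ReLU DAG network in topological order.  Internal node i (i = 0,1,...)
   receives weights W i on the m input coordinates, weights V i j on the
   earlier internal nodes j < i (weight 0 = no edge), and bias b i.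
   [nn_vals W V b x t] is the list of the values of nodes 0 .. t-1. *)
Fixpoint nn_vals (W : nat -> 'I_m -> R) (V : nat -> nat -> R) (b : nat -> R)
  (x : 'rV[R]_m) (t : nat) : seq R :=
  match t with
  | 0 => [::]
  | t'.+1 =>
      let s := nn_vals W V b x t' in
      rcons s (relu (\sum_(j < m) W t' j * x ord0 j
                     + \sum_(j < t') V t' j * nth 0 s j + b t'))
  end.

Definition nn_eval (k : nat) (W : nat -> 'I_m -> R) (V : nat -> nat -> R)
  (b : nat -> R) (a : 'I_m -> R) (c : nat -> R) (c0 : R) (x : 'rV[R]_m) : R :=
  \sum_(j < m) a j * x ord0 j + \sum_(i < k) c i * nth 0 (nn_vals W V b x k) i + c0.

(* NN_n : real functions on Xset computable by a ReLU DAG with <= n internal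
   nodes (functions on R^m are identified when they agree on Xset). *)
Definition NN (Xset : set 'rV[R]_m) (n : nat) : set ('rV[R]_m -> R) :=
  [set f | exists k W V b a c c0, (k <= n)%N /\
     forall v, Xset v -> f v = @nn_eval k W V b a c c0 v].

Inductive tree : Type :=
  | Leaf of R
  | Node of 'I_m & R & tree & tree.

Fixpoint tree_depth (t : tree) : nat :=
  match t with
  | Leaf _ => 0
  | Node _ _ l r => (maxn (tree_depth l) (tree_depth r)).+1
  end.

Fixpoint tree_leaves_ok (t : tree) : Prop :=
  match t with
  | Leaf c => 0 <= c <= 1
  | Node _ _ l r => tree_leaves_ok l /\ tree_leaves_ok r
  end.

Fixpoint tree_eval (t : tree) (x : 'rV[R]_m) : R :=
  match t with
  | Leaf c => c
  | Node j th l r => if x ord0 j <= th then tree_eval l x else tree_eval r x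
  end.

Definition Tree (Xset : set 'rV[R]_m) (d : nat) : set ('rV[R]_m -> R) :=
  [set f | exists t, (tree_depth t <= d)%N /\ tree_leaves_ok t /\
     forall v, Xset v -> f v = tree_eval t v].

End Defs.

Section Risk.
Local Open Scope ereal_scope.
Variables (R : realType) (m : nat) (dsp : measure_display) (Omega : measurableType dsp)
  (P : probability Omega R) (Y : Type) (x : Omega -> 'rV[R]_m) (y : Omega -> Y)
  (L : Y -> R -> R).

Definition risk (f : 'rV[R]_m -> R) : \bar R :=
  \int[P]_(w in setT) (L (y w) (f (x w)))%:E.

Definition risk_class (F : set ('rV[R]_m -> R)) : \bar R :=
  ereal_inf [set risk f | f in F].

Definition dist2 (f1 f2 : 'rV[R]_m -> R) : \bar R :=
  \int[P]_(w in setT) (((f1 (x w) - f2 (x w)) ^+ 2)%R)%:E.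
End Risk.

Definition strongly_convex (R : realType) (Y : Type) (L : Y -> R -> R) (mu : R) : Prop :=
  forall yv p1 p2, L yv p2 + derive1 (L yv) p2 * (p1 - p2) + mu / 2 * (p1 - p2) ^+ 2 <= L yv p1.

Definition C1_in_p (R : realType) (Y : Type) (L : Y -> R -> R) : Prop :=
  forall yv, (forall p, derivable (L yv) p 1) /\ continuous (derive1 (L yv) : R^o -> R^o).

(** Strong convexity gives, pointwise, [(a - b)^2 <= 4/mu (L a + L b - 2 L ((a+b)/2))].
  Integrating, the squared distance between two predictors is controlled by the
  excess of their mean risk over the risk of their pointwise average.  Both
  ReLU networks and regression trees are closed under averaging at the price of
  doubling the size (networks run side by side, trees grafted onto each other's
  leaves), so the average lies in the doubled class and its risk is at least
  [R(F_2n)]; the two [eps]-optimal risks are at most [R(F_n) + eps]. *)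
From HB Require Import structures.
From mathcomp Require Import all_boot all_order all_algebra.
From mathcomp Require Import all_classical all_reals all_analysis.
From mathcomp Require Import ring lra.
Import Order.TTheory GRing.Theory Num.Theory.
Local Open Scope classical_set_scope.
Local Open Scope ring_scope.

Lemma strongly_convex_midpoint (R : realType) (Y : Type) (L : Y -> R -> R) (mu : R)
    (yv : Y) (a b : R) :
  0 < mu -> strongly_convex L mu ->
  (a - b) ^+ 2 <= 4 / mu * (L yv a + L yv b - 2 * L yv ((a + b) / 2)).
Proof.
move=> mu0 sc.
have := sc yv a ((a + b) / 2); have := sc yv b ((a + b) / 2).
set c := derive1 (L yv) ((a + b) / 2) => hb ha.
have gap : mu / 4 * (a - b) ^+ 2 <= L yv a + L yv b - 2 * L yv ((a + b) / 2).
  have -> : mu / 4 * (a - b) ^+ 2 =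
      mu / 2 * (a - (a + b) / 2) ^+ 2 + mu / 2 * (b - (a + b) / 2) ^+ 2 by field.
  have slopes_cancel : c * (a - (a + b) / 2) + c * (b - (a + b) / 2) = 0 by field.
  lra.
have -> : (a - b) ^+ 2 = 4 / mu * (mu / 4 * (a - b) ^+ 2) by field; rewrite gt_eqF.
by rewrite ler_wpM2l // divr_ge0 // ltW.
Qed.

(* Unlike [ge0_le_integral], no measurability is needed: a nonnegative integral is
  a supremum over the simple functions below the integrand. *)
Lemma ge0_le_integralT (d : measure_display) (T : measurableType d) (R : realType)
    (mu : {measure set T -> \bar R}) (f g : T -> \bar R) :
  (forall t, (0 <= f t)%E) -> (forall t, (f t <= g t)%E) ->
  (\int[mu]_t f t <= \int[mu]_t g t)%E.
Proof.
move=> f0 fg; have g0 t : (0 <= g t)%E := le_trans (f0 t) (fg t).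
rewrite (ge0_integralTE mu f0) (ge0_integralTE mu g0).
apply: ereal_sup_le => _ [h hf <-]; exists h => //= t.
exact: le_trans (hf t) (fg t).
Qed.

Lemma lee_mean_gap (R : realType) (k e r1 r2 r : R) (b c : \bar R) : 0 < k ->
  (r1%:E <= b + e%:E)%E -> (r2%:E <= b + e%:E)%E -> (c <= r%:E)%E ->
  (k%:E * (r1%:E + r2%:E - 2%:E * r%:E) <= (2 * k)%:E * (b - c + e%:E))%E.
Proof.
move=> k0; have k20 : 0 < 2 * k by rewrite mulr_gt0.
case: b => [b||] //; case: c => [c||] //=; rewrite ?lee_fin.
- by move=> h1 h2 hc; nra.
all: by move=> *; rewrite gt0_muley ?lte_fin ?leey.
Qed.

Section NearOptimalPredictors.
Local Open Scope ereal_scope.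
Variables (R : realType) (m : nat) (dsp : measure_display) (Omega : measurableType dsp)
  (P : probability Omega R) (Y : Type) (x : Omega -> 'rV[R]_m) (y : Omega -> Y)
  (L : Y -> R -> R) (mu : R).
Hypotheses (mu_gt0 : (0 < mu)%R) (L_sc : strongly_convex L mu).

Let loss (f : 'rV[R]_m -> R) w := (L (y w) (f (x w)))%:E.

Lemma dist2_le_midpoint_gap (f1 f2 g : 'rV[R]_m -> R) :
  P.-integrable setT (loss f1) -> P.-integrable setT (loss f2) ->
  P.-integrable setT (loss g) ->
  (forall w, g (x w) = (f1 (x w) + f2 (x w)) / 2)%R ->
  dist2 P x f1 f2 <=
    (4 / mu)%:E * (risk P x y L f1 + risk P x y L f2 - 2%:E * risk P x y L g).
Proof.
move=> i1 i2 ig gE.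
have i12 : P.-integrable setT (loss f1 \+ loss f2) by exact: integrableD.
have i2g : P.-integrable setT (fun w => 2%:E * loss g w) by exact: integrableZl.
have iS : P.-integrable setT (fun w => loss f1 w + loss f2 w - 2%:E * loss g w).
  exact: integrableB.
rewrite /risk -(integralD measurableT i1 i2) -(integralZl measurableT ig).
rewrite -(integralB measurableT i12 i2g) -(integralZl measurableT iS).
apply: ge0_le_integralT => w; first by rewrite lee_fin sqr_ge0.
by rewrite /loss gE lee_fin strongly_convex_midpoint.
Qed.

Lemma dist2_le_near_optimal (G : set ('rV[R]_m -> R)) (f1 f2 : 'rV[R]_m -> R)
    (Rn : \bar R) (eps : R) :
  (forall f, G f -> P.-integrable setT (loss f)) ->
  G f1 -> G f2 -> G (fun v => (f1 v + f2 v) / 2)%R ->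
  risk P x y L f1 <= Rn + eps%:E -> risk P x y L f2 <= Rn + eps%:E ->
  dist2 P x f1 f2 <= (8 / mu)%:E * (Rn - risk_class P x y L G + eps%:E).
Proof.
move=> intG Gf1 Gf2 + opt1 opt2; set g := fun v => _ => Gg.
have infG : risk_class P x y L G <= risk P x y L g.
  by apply: ereal_inf_lbound; exists g.
have fin f : G f -> exists r, risk P x y L f = r%:E.
  move=> Gf; exists (fine (risk P x y L f)); rewrite fineK //.
  exact: integrable_fin_num (intG _ Gf).
have [r1 r1E] := fin _ Gf1; have [r2 r2E] := fin _ Gf2.
have [r rE] := fin _ Gg.
apply: (le_trans (dist2_le_midpoint_gap _ _ _ (intG _ Gf1)
  (intG _ Gf2) (intG _ Gg) (fun w => erefl))).
rewrite r1E r2E rE (_ : 8 / mu = 2 * (4 / mu))%R; last by field; rewrite gt_eqF.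
by apply: lee_mean_gap; rewrite ?divr_gt0 // -?r1E -?r2E -?rE.
Qed.

End NearOptimalPredictors.

Section RegressionTrees.
Variables (R : realType) (m : nat).
Implicit Types (t : tree R m) (op : R -> R -> R).

Fixpoint map_leaves (f : R -> R) t : tree R m :=
  match t with
  | Leaf c => Leaf m (f c)
  | Node j th l r => Node j th (map_leaves f l) (map_leaves f r)
  end.

Fixpoint graft op t1 t2 : tree R m :=
  match t1 with
  | Leaf c => map_leaves (op c) t2
  | Node j th l r => Node j th (graft op l t2) (graft op r t2)
  end.

Lemma tree_depth_map_leaves f t : tree_depth (map_leaves f t) = tree_depth t.
Proof. by elim: t => //= j th l -> r ->. Qed.

Lemma tree_depth_graft op t1 t2 :
  (tree_depth (graft op t1 t2) <= tree_depth t1 + tree_depth t2)%N.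
Proof.
elim: t1 => [c|j th l IHl r IHr] /=; first by rewrite tree_depth_map_leaves.
rewrite addSn ltnS geq_max (leq_trans IHl) ?(leq_trans IHr) //.
  by rewrite leq_add2r leq_maxr.
by rewrite leq_add2r leq_maxl.
Qed.

Lemma tree_leaves_ok_map_leaves f t :
  (forall c, 0 <= c <= 1 -> 0 <= f c <= 1) ->
  tree_leaves_ok t -> tree_leaves_ok (map_leaves f t).
Proof. by move=> f01; elim: t => [c|j th l IHl r IHr] /=; [apply: f01 | case=> /IHl ? /IHr ?]. Qed.

Lemma tree_leaves_ok_graft op t1 t2 :
  (forall a b, 0 <= a <= 1 -> 0 <= b <= 1 -> 0 <= op a b <= 1) ->
  tree_leaves_ok t1 -> tree_leaves_ok t2 -> tree_leaves_ok (graft op t1 t2).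
Proof.
move=> op01 + ok2; elim: t1 => [c|j th l IHl r IHr] /=.
  by move=> c01; apply: tree_leaves_ok_map_leaves => // b; apply: op01.
by case=> /IHl ? /IHr ?.
Qed.

Lemma tree_eval_map_leaves f t v : tree_eval (map_leaves f t) v = f (tree_eval t v).
Proof. by elim: t => [c|j th l IHl r IHr] //=; rewrite IHl IHr; case: ifP. Qed.

Lemma tree_eval_graft op t1 t2 v :
  tree_eval (graft op t1 t2) v = op (tree_eval t1 v) (tree_eval t2 v).
Proof.
elim: t1 => [c|j th l IHl r IHr] /=; first by rewrite tree_eval_map_leaves.
by rewrite IHl IHr; case: ifP.
Qed.

Lemma Tree_graft op (Xset : set 'rV[R]_m) d1 d2 f1 f2 :
  (forall a b, 0 <= a <= 1 -> 0 <= b <= 1 -> 0 <= op a b <= 1) ->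
  Tree Xset d1 f1 -> Tree Xset d2 f2 ->
  Tree Xset (d1 + d2) (fun v => op (f1 v) (f2 v)).
Proof.
move=> op01 [t1 [dt1 [ok1 f1E]]] [t2 [dt2 [ok2 f2E]]]; exists (graft op t1 t2).
split; first exact: leq_trans (tree_depth_graft _ _ _) (leq_add dt1 dt2).
split; first exact: tree_leaves_ok_graft.
by move=> v Xv; rewrite tree_eval_graft f1E ?f2E.
Qed.

Lemma Tree_midpoint (Xset : set 'rV[R]_m) d1 d2 f1 f2 :
  Tree Xset d1 f1 -> Tree Xset d2 f2 ->
  Tree Xset (d1 + d2) (fun v => (f1 v + f2 v) / 2).
Proof.
apply: (Tree_graft (fun a b => (a + b) / 2)) => a b /andP[a0 a1] /andP[b0 b1].
by apply/andP; split; lra.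
Qed.

Lemma Tree_le (Xset : set 'rV[R]_m) d d' : (d <= d')%N -> Tree Xset d `<=` Tree Xset d'.
Proof. by move=> dd' f [t [dt t_ok]]; exists t; split => //; apply: leq_trans dd'. Qed.

End RegressionTrees.

Lemma size_nn_vals (R : realType) (m : nat) W V b (v : 'rV[R]_m) t :
  size (nn_vals W V b v t) = t.
Proof. by elim: t => //= t IH; rewrite size_rcons IH. Qed.

Section ParallelNetworks.
Variables (R : realType) (m k1 : nat) (W1 W2 : nat -> 'I_m -> R)
  (V1 V2 : nat -> nat -> R) (b1 b2 : nat -> R).

Definition par_W i := if (i < k1)%N then W1 i else W2 (i - k1)%N.
Definition par_V i j :=
  if (i < k1)%N then V1 i j else if (j < k1)%N then 0 else V2 (i - k1)%N (j - k1)%N.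
Definition par_b i := if (i < k1)%N then b1 i else b2 (i - k1)%N.

Lemma nn_vals_par_lo v t : (t <= k1)%N ->
  nn_vals par_W par_V par_b v t = nn_vals W1 V1 b1 v t.
Proof.
elim: t => //= t IH lt_t_k1.
by rewrite IH ?(ltnW lt_t_k1) // /par_W /par_V /par_b lt_t_k1.
Qed.

Lemma nn_vals_par v t : nn_vals par_W par_V par_b v (k1 + t) =
  nn_vals W1 V1 b1 v k1 ++ nn_vals W2 V2 b2 v t.
Proof.
elim: t => [|t IH]; first by rewrite addn0 cats0 nn_vals_par_lo.
have ge_k1 i : (k1 + i < k1)%N = false by rewrite ltnNge leq_addr.
rewrite addnS /= IH -rcons_cat /par_W /par_b ge_k1 addKn.
congr (rcons _ (relu (_ + _ + _))).
rewrite big_split_ord /= big1 ?add0r => [|j _]; last first.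
  by rewrite /par_V ge_k1 /= ltn_ord mul0r.
apply: eq_bigr => j _.
by rewrite /par_V !ge_k1 !addKn nth_cat size_nn_vals ge_k1 addKn.
Qed.

Lemma nn_eval_par k2 a1 a2 c1 c2 c01 c02 s1 s2 v :
  nn_eval (k1 + k2) par_W par_V par_b (fun j => s1 * a1 j + s2 * a2 j)
    (fun i => if (i < k1)%N then s1 * c1 i else s2 * c2 (i - k1)%N)
    (s1 * c01 + s2 * c02) v =
  s1 * nn_eval k1 W1 V1 b1 a1 c1 c01 v + s2 * nn_eval k2 W2 V2 b2 a2 c2 c02 v.
Proof.
rewrite /nn_eval nn_vals_par big_split_ord /=.
have ge_k1 i : (k1 + i < k1)%N = false by rewrite ltnNge leq_addr.
under [\sum_(i < k1) _]eq_bigr => i _ do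
  rewrite /= ltn_ord nth_cat size_nn_vals ltn_ord -mulrA.
under [\sum_(i < k2) _]eq_bigr => i _ do
  rewrite /= ge_k1 addKn nth_cat size_nn_vals ge_k1 addKn -mulrA.
under [\sum_(j < m) _]eq_bigr => j _ do rewrite mulrDl -!mulrA.
rewrite big_split -!mulr_sumr /=; ring.
Qed.

End ParallelNetworks.

Lemma NN_lincomb (R : realType) (m : nat) (Xset : set 'rV[R]_m) n1 n2 f1 f2 (s1 s2 : R) :
  NN Xset n1 f1 -> NN Xset n2 f2 -> NN Xset (n1 + n2) (fun v => s1 * f1 v + s2 * f2 v).
Proof.
move=> [k1 [W1 [V1 [b1 [a1 [c1 [c01 [kn1 f1E]]]]]]]].
move=> [k2 [W2 [V2 [b2 [a2 [c2 [c02 [kn2 f2E]]]]]]]].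
exists (k1 + k2)%N, (@par_W _ _ k1 W1 W2), (@par_V _ k1 V1 V2), (@par_b _ k1 b1 b2),
  (fun j => s1 * a1 j + s2 * a2 j),
  (fun i => if (i < k1)%N then s1 * c1 i else s2 * c2 (i - k1)%N), (s1 * c01 + s2 * c02).
split; first exact: leq_add.
by move=> v Xv; rewrite nn_eval_par f1E ?f2E.
Qed.

Lemma NN_le (R : realType) (m : nat) (Xset : set 'rV[R]_m) n n' :
  (n <= n')%N -> NN Xset n `<=` NN Xset n'.
Proof.
move=> nn' f [k [W [V [b [a [c [c0 [kn fE]]]]]]]].
by exists k, W, V, b, a, c, c0; split => //; apply: leq_trans nn'.
Qed.

Theorem theorem7 (R : realType) (m : nat) (dsp : measure_display)
  (Omega : measurableType dsp) (P : probability Omega R) (Y : Type)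
  (Xset : set 'rV[R]_m) (x : Omega -> 'rV[R]_m) (y : Omega -> Y)
  (L : Y -> R -> R) (mu eps : R) :
  (forall w, Xset (x w)) ->
  (forall j : 'I_m, measurable_fun setT (fun w => x w ord0 j)) ->
  C1_in_p L -> 0 < mu -> strongly_convex L mu -> 0 < eps ->
  (forall (n : nat) (f1 f2 : 'rV[R]_m -> R), (1 <= n)%N ->
     (forall f, NN Xset (2 * n) f ->
        P.-integrable setT (fun w => (L (y w) (f (x w)))%:E)) ->
     NN Xset n f1 -> NN Xset n f2 ->
     (risk P x y L f1 <= risk_class P x y L (NN Xset n) + eps%:E)%E ->
     (risk P x y L f2 <= risk_class P x y L (NN Xset n) + eps%:E)%E ->
     (dist2 P x f1 f2 <= (8 / mu)%:E *
        (risk_class P x y L (NN Xset n) - risk_class P x y L (NN Xset (2 * n))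
         + eps%:E))%E) /\
  (forall (d : nat) (f1 f2 : 'rV[R]_m -> R), (1 <= d)%N ->
     (forall f, Tree Xset (2 * d) f ->
        P.-integrable setT (fun w => (L (y w) (f (x w)))%:E)) ->
     Tree Xset d f1 -> Tree Xset d f2 ->
     (risk P x y L f1 <= risk_class P x y L (Tree Xset d) + eps%:E)%E ->
     (risk P x y L f2 <= risk_class P x y L (Tree Xset d) + eps%:E)%E ->
     (dist2 P x f1 f2 <= (8 / mu)%:E *
        (risk_class P x y L (Tree Xset d) - risk_class P x y L (Tree Xset (2 * d))
         + eps%:E))%E).
Proof.
(* Only strong convexity is used: as stated, it already involves [derive1] without
  requiring differentiability, and the integrability hypotheses replace measurability. *)
move=> _ _ _ mu_gt0 L_sc _.
have le_double n : (n <= 2 * n)%N by rewrite leq_pmull.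
have addnn2 n : (n + n = 2 * n)%N by rewrite addnn mul2n.
split=> [n|d] f1 f2 _ intG Ff1 Ff2 opt1 opt2; apply: dist2_le_near_optimal => //.
- exact: NN_le (le_double n) _ Ff1.
- exact: NN_le (le_double n) _ Ff2.
- have -> : (fun v => (f1 v + f2 v) / 2) = (fun v => 2^-1 * f1 v + 2^-1 * f2 v).
    by apply/funext => v; rewrite mulrDl ![_ / 2]mulrC.
  by rewrite -addnn2; apply: NN_lincomb.
- exact: Tree_le (le_double d) _ Ff1.
- exact: Tree_le (le_double d) _ Ff2.
- by rewrite -addnn2; apply: Tree_midpoint.
Qed.
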